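(* Let $C\in\mathbb{R}^{d\times d}$ be symmetric positive-definite, $\mu_0=\mathcal{N}(0,C)$, and $\rho\colon\mathbb{R}^d\to(0,\infty)$ measurable. Assume there exist $\alpha\in(0,1/\sqrt2]$ and $R>0$ such that $B_{\alpha\|x\|}(0)\subseteq G_{\rho(x)}$ for all $x$ with $\|x\|>R$. Let $E$ be the transition kernel of elliptical slice sampling for $(\rho,\mu_0)$. Then there exist $\delta\in[0,1)$ and $L\in[0,\infty)$ such that $\int_{\mathbb{R}^d}\|y\|\,E(x,\mathrm{d}y)\le\delta\|x\|+L$ for all $x\in\mathbb{R}^d$.
   Context: $\|\cdot\|$ is the Euclidean norm, $B_r(y)=\{z:\|z-y\|\le r\}$, and $G_t=\{x\in\mathbb{R}^d:\rho(x)\ge t\}$ for $t\ge0$. Let $p(x,w,\theta)=\cos(\theta)x+\sin(\theta)w$. Elliptical slice sampling performs one transition from $x$ as follows: draw $w\sim\mu_0$; draw $t\sim\mathcal{U}[0,\rho(x)]$; draw $\theta\sim\mathcal{U}[0,2\pi]$ and set $\theta_{\min}=\theta-2\pi$, $\theta_{\max}=\theta$; while $p(x,w,\theta)\notin G_t$: if $\theta<0$ set $\theta_{\min}=\theta$, else set $\theta_{\max}=\theta$, and draw a new $\theta\sim\mathcal{U}[\theta_{\min},\theta_{\max}]$; output $y=p(x,w,\theta)$. All draws are independent; $E(x,A)$ is the probability that the output lies in $A$. *)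

From HB Require Import structures.
From mathcomp Require Import all_boot all_order all_algebra.
From mathcomp Require Import all_classical all_reals all_analysis.

Set Implicit Arguments.
Unset Strict Implicit.
Unset Printing Implicit Defensive.

Import Order.TTheory GRing.Theory Num.Theory.
Import numFieldNormedType.Exports.

Local Open Scope classical_set_scope.
Local Open Scope ring_scope.

(* generated by the coordinate projections (= product = Borel sigma-algebra) *)
Definition rV_measure_display : measure_display -> measure_display.
Proof. exact. Qed.

Section measurable_rV.
Context {R : realType} (d : nat).

Definition rV_coord : 'I_d -> 'rV[R]_d -> R := fun i x => x ord0 i.

Let rV_set0 : g_sigma_preimage rV_coord set0.
Proof. exact: sigma_algebra0. Qed.

Let rV_setC A : g_sigma_preimage rV_coord A -> g_sigma_preimage rV_coord (~` A).
Proof. exact: sigma_algebraC. Qed.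

Let rV_bigcup (F : _^nat) : (forall i, g_sigma_preimage rV_coord (F i)) ->
  g_sigma_preimage rV_coord (\bigcup_i (F i)).
Proof. exact: sigma_algebra_bigcup. Qed.

HB.instance Definition _ := @isMeasurable.Build
  (rV_measure_display default_measure_display)
  'rV[R]_d (g_sigma_preimage rV_coord) rV_set0 rV_setC rV_bigcup.
End measurable_rV.

Section ess.
Context {R : realType}.
Local Notation leb := (@lebesgue_measure R).

Definition enorm d (x : 'rV[R]_d) : R := Num.sqrt (\sum_(i < d) x ord0 i ^+ 2).

Definition eball d (y : 'rV[R]_d) (r : R) : set 'rV[R]_d :=
  [set z | enorm (z - y) <= r].

Definition Glevel d (rho : 'rV[R]_d -> R) (t : R) : set 'rV[R]_d :=
  [set x | t <= rho x].

Definition sym_posdef d (C : 'M[R]_d) : Prop :=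
  C^T = C /\ forall v : 'rV[R]_d, v != 0 -> 0 < (v *m C *m v^T) ord0 ord0.

Fixpoint iter_leb_int (n : nat) (f : (nat -> R) -> \bar R) : \bar R :=
  match n with
  | 0%N => f (fun _ => 0)
  | n'.+1 => (\int[leb]_(u in [set: R])
                iter_leb_int n' (fun v => f (fun k => if k == n' then u else v k)))%E
  end.

Definition leb_int_rV d (f : 'rV[R]_d -> \bar R) : \bar R :=
  iter_leb_int d (fun v => f (\row_(i < d) v (nat_of_ord i))).

Definition gauss_density d (C : 'M[R]_d) (w : 'rV[R]_d) : R :=
  (Num.sqrt ((pi *+ 2) ^+ d * \det C))^-1 *
  expR (- ((w *m invmx C *m w^T) ord0 ord0) / 2).

Definition gauss_int d (C : 'M[R]_d) (f : 'rV[R]_d -> \bar R) : \bar R :=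
  leb_int_rV (fun w => ((gauss_density C w)%:E * f w)%E).

Definition ellipse d (x w : 'rV[R]_d) (theta : R) : 'rV[R]_d :=
  cos theta *: x + sin theta *: w.

(* Shrinkage loop with current bracket [a, b], at most n further draws:
   expected value of f(output), counting only runs terminating within n draws. *)
Fixpoint shrink d (rho : 'rV[R]_d -> R) (x w : 'rV[R]_d) (t : R)
    (f : 'rV[R]_d -> \bar R) (n : nat) (a b : R) : \bar R :=
  match n with
  | 0%N => 0%E
  | n'.+1 =>
    (((b - a)^-1)%R%:E *
     \int[leb]_(th in [set` `[a, b]])
        (if (t <= rho (ellipse x w (th : R)))%R then f (ellipse x w th)
         else if (th < 0 :> R)%R then shrink rho x w t f n' th b
         else shrink rho x w t f n' a th))%E
  end.

(* first draw theta ~ U[0, 2pi], bracket [theta - 2pi, theta];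
   at most n.+1 draws in total *)
Definition ess_run d (rho : 'rV[R]_d -> R) (x w : 'rV[R]_d) (t : R)
    (f : 'rV[R]_d -> \bar R) (n : nat) : \bar R :=
  (((pi *+ 2)^-1)%R%:E *
   \int[leb]_(th in [set` `[0%R, (pi *+ 2)%R]])
      (if (t <= rho (ellipse x w (th : R)))%R then f (ellipse x w th)
       else shrink rho x w t f n (th - pi *+ 2)%R th))%E.

(* integral of nonnegative f against E(x, .), the ESS transition kernel:
   E[f(y)] with w ~ mu0, t ~ U[0, rho x], and the (terminating) shrinkage
   loop, as the supremum over the number of allowed loop iterations. *)
Definition ess_kernel_int d (C : 'M[R]_d) (rho : 'rV[R]_d -> R)
    (x : 'rV[R]_d) (f : 'rV[R]_d -> \bar R) : \bar R :=
  gauss_int C (fun w =>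
    (((rho x)^-1)%R%:E *
     \int[leb]_(t in [set` `[0%R, rho x]])
        ereal_sup (range (fun n => ess_run rho x w t f n)))%E).

End ess.

From HB Require Import structures.
From mathcomp Require Import all_boot all_order all_algebra.
From mathcomp Require Import all_classical all_reals all_analysis.
From mathcomp Require Import ring lra.
From mathcomp Require Import measurable_realfun.

Set Implicit Arguments.
Unset Strict Implicit.
Unset Printing Implicit Defensive.

Import Order.TTheory GRing.Theory Num.Theory.
Import numFieldNormedType.Exports.
Local Open Scope classical_set_scope.
Local Open Scope ring_scope.

(* One transition outputs y = cos(theta) x + sin(theta) w, so always
   |y| <= |x| + |w|.  If |x| > R and |w| <= alpha |x| / 2, every first
   proposal with |cos theta| <= alpha / 2 (an arc of probability beta / pi
   around pi / 2) lies in the ball of radius alpha |x|, which is contained in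
   G_rho(x), hence in G_t: it is accepted at once and |y| <= alpha |x|.
   Averaging over theta gives E|y| <= (1 - c) |x| + c R + K |w| with
   c = (beta / pi) (1 - alpha); if instead |w| is large, |x| <= 2 |w| / alpha
   and the loss is absorbed by K.  It remains to integrate |w| against
   N(0, C): integrating out one coordinate at a time, completing the square
   with the Schur complement of the precision matrix, bounds the first
   absolute moment by a finite constant. *)

Section sums_of_squares.
Context {R : realFieldType}.

Lemma sum_sqr_le_sqr_sum n (a : 'I_n -> R) : (forall i, 0 <= a i) ->
  \sum_i a i ^+ 2 <= (\sum_i a i) ^+ 2.
Proof.
move=> a0.
suff [] : \sum_i a i ^+ 2 <= (\sum_i a i) ^+ 2 /\ 0 <= \sum_i a i by [].
apply: (big_ind2 (fun x y => x <= y ^+ 2 /\ 0 <= y)).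
- by rewrite expr0n.
- by move=> x1 x2 y1 y2 [? ?] [? ?]; split; [nra | exact: addr_ge0].
- by move=> i _; split.
Qed.

Lemma cauchy_schwarz n (a b : 'I_n -> R) :
  (\sum_i a i * b i) ^+ 2 <= (\sum_i a i ^+ 2) * (\sum_i b i ^+ 2).
Proof.
have lagrange : \sum_i \sum_j (a i * b j - a j * b i) ^+ 2 =
   \sum_i \sum_j (a i ^+ 2 * b j ^+ 2) + \sum_i \sum_j (a j ^+ 2 * b i ^+ 2)
   - (\sum_i \sum_j (a i * b i) * (a j * b j)) *+ 2.
  rewrite -sumrMnl -big_split -sumrB /=; apply: eq_bigr => i _.
  rewrite -sumrMnl -big_split -sumrB /=; apply: eq_bigr => j _.
  by rewrite mulr2n; ring.
rewrite [X in _ = _ + X - _]exchange_big /= -!big_distrlr /= -expr2 in lagrange.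
rewrite -subr_ge0.
have -> : (\sum_i a i ^+ 2) * (\sum_i b i ^+ 2) - (\sum_i a i * b i) ^+ 2 =
    (\sum_i \sum_j (a i * b j - a j * b i) ^+ 2) / 2.
  by rewrite lagrange mulr2n; field.
apply: divr_ge0 => //; apply: sumr_ge0 => i _; apply: sumr_ge0 => j _.
exact: sqr_ge0.
Qed.

End sums_of_squares.

Lemma sqrtr_le_sqr {R : rcfType} (a b : R) : 0 <= b -> a <= b ^+ 2 -> Num.sqrt a <= b.
Proof. by move=> b0 ab; rewrite -(ger0_norm b0) -sqrtr_sqr ler_wsqrtr. Qed.

Section euclidean_norm.
Context {R : realType}.

Lemma enorm_ge0 d (x : 'rV[R]_d) : 0 <= enorm x.
Proof. exact: sqrtr_ge0. Qed.

Lemma enormD d (x y : 'rV[R]_d) : enorm (x + y) <= enorm x + enorm y.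
Proof.
rewrite /enorm; apply: sqrtr_le_sqr; first by rewrite addr_ge0 ?sqrtr_ge0.
set Sx := \sum_(i < d) x ord0 i ^+ 2; set Sy := \sum_(i < d) y ord0 i ^+ 2.
have Sx0 : 0 <= Sx by apply: sumr_ge0 => i _; exact: sqr_ge0.
have Sy0 : 0 <= Sy by apply: sumr_ge0 => i _; exact: sqr_ge0.
have -> : \sum_(i < d) (x + y) ord0 i ^+ 2 =
    Sx + (\sum_i x ord0 i * y ord0 i) *+ 2 + Sy.
  rewrite /Sx /Sy -sumrMnl -!big_split /=; apply: eq_bigr => i _.
  by rewrite mxE mulr2n; ring.
have CS : \sum_i x ord0 i * y ord0 i <= Num.sqrt Sx * Num.sqrt Sy.
  rewrite -sqrtrM //; apply: (le_trans (ler_norm _)).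
  rewrite -sqrtr_sqr; apply: ler_wsqrtr; exact: cauchy_schwarz.
by rewrite sqrrD !sqr_sqrtr // !lerD // lerMn2r CS orbT.
Qed.

Lemma enormZ d (a : R) (x : 'rV[R]_d) : enorm (a *: x) = `|a| * enorm x.
Proof.
rewrite /enorm -sqrtr_sqr -sqrtrM ?sqr_ge0 //; congr Num.sqrt.
by rewrite mulr_sumr; apply: eq_bigr => i _; rewrite mxE exprMn.
Qed.

Lemma enorm_le_sum_abs d (x : 'rV[R]_d) : enorm x <= \sum_i `|x ord0 i|.
Proof.
apply: sqrtr_le_sqr; first exact: sumr_ge0.
under eq_bigr do rewrite -real_normK ?num_real //.
exact: sum_sqr_le_sqr_sum.
Qed.

Lemma enorm_ellipse d (x w : 'rV[R]_d) th :
  enorm (ellipse x w th) <= `|cos th| * enorm x + `|sin th| * enorm w.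
Proof. by rewrite -!enormZ; exact: enormD. Qed.

Lemma enorm_ellipse_le d (x w : 'rV[R]_d) th :
  enorm (ellipse x w th) <= enorm x + enorm w.
Proof.
apply: (le_trans (enorm_ellipse x w th)).
by rewrite lerD // ler_piMl ?enorm_ge0 ?cos_max ?sin_max.
Qed.

End euclidean_norm.

Section integral_monotone.
Context d (T : measurableType d) (R : realType) (mu : {measure set T -> \bar R}).

(* No measurability is needed: the integral of a nonnegative function is the
   supremum of the integrals of the simple functions below it. *)
Lemma ge0_le_integral_nomeas (D : set T) (f g : T -> \bar R) :
  (forall x, D x -> (0 <= f x)%E) -> (forall x, D x -> (f x <= g x)%E) ->
  (\int[mu]_(x in D) f x <= \int[mu]_(x in D) g x)%E.
Proof.
move=> f0 fg.
have g0 x : D x -> (0 <= g x)%E by move=> Dx; exact: le_trans (f0 _ Dx) (fg _ Dx).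
rewrite (ge0_integralE _ f0) (ge0_integralE _ g0).
apply: ereal_sup_le => _ [h /= hf <-]; exists h => //= x.
apply: le_trans (hf x) _; rewrite /patch; case: ifP => // /[!inE]; exact: fg.
Qed.

End integral_monotone.

Definition vcons {T : Type} (u : T) (v : nat -> T) : nat -> T :=
  fun k => if k is k'.+1 then v k' else u.

Section iterated_integral.
Context {R : realType}.
Local Notation leb := (@lebesgue_measure R).

Lemma iter_leb_int_ge0 n (f : (nat -> R) -> \bar R) :
  (forall v, (0 <= f v)%E) -> (0 <= iter_leb_int n f)%E.
Proof.
elim: n f => [|n IH] f f0 /=; first exact: f0.
by apply: integral_ge0 => u _; exact: IH.
Qed.

Lemma le_iter_leb_int n (f g : (nat -> R) -> \bar R) :
  (forall v, (0 <= f v)%E) -> (forall v, (f v <= g v)%E) ->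
  (iter_leb_int n f <= iter_leb_int n g)%E.
Proof.
elim: n f g => [|n IH] f g f0 fg /=; first exact: fg.
apply: ge0_le_integral_nomeas => u _; first exact: iter_leb_int_ge0.
exact: IH.
Qed.

(* [iter_leb_int] integrates the last coordinate outermost; this exchanges
   the order so that coordinate 0 is integrated innermost. *)
Lemma iter_leb_int_vcons n f : iter_leb_int n.+1 f =
  iter_leb_int n (fun v => (\int[leb]_(u in [set: R]) f (vcons u v))%E).
Proof.
elim: n f => [|n IH] f.
  by apply: eq_integral => u _; congr f; apply/funext => -[|k].
rewrite -[LHS]/(\int[leb]_(u in [set: R]) iter_leb_int n.+1
  (fun v => f (fun k => if k == n.+1 then u else v k)))%E.
under eq_integral do rewrite IH.
apply: eq_integral => u _; congr iter_leb_int; apply/funext => v.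
by apply: eq_integral => u' _; congr f; apply/funext => -[|k].
Qed.

End iterated_integral.

Section gauss_kernel.
Context {R : realType}.
Local Notation leb := (@lebesgue_measure R).

Definition gauss_kernel (c b u : R) : R := expR (- (c * (u + b) ^+ 2) / 2).
Definition gauss_mass (c : R) : R := Num.sqrt (pi *+ 2 / c).

Lemma gauss_kernel_ge0 c b u : 0 <= gauss_kernel c b u.
Proof. exact: expR_ge0. Qed.

Lemma gauss_kernel_normal c b : 0 < c ->
  gauss_kernel c b = normal_fun (- b) (Num.sqrt c)^-1.
Proof.
move=> c0; apply/funext => u.
rewrite /gauss_kernel /normal_fun opprK exprVn sqr_sqrtr ?ltW //.
by congr expR; rewrite -mulr_natr; field; exact: lt0r_neq0.
Qed.

Lemma measurable_gauss_kernel c b : 0 < c ->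
  measurable_fun [set: R] (gauss_kernel c b).
Proof. by move=> c0; rewrite gauss_kernel_normal //; exact: measurable_normal_fun. Qed.

Lemma integral_gauss_kernel c b : 0 < c ->
  (\int[leb]_(u in [set: R]) (gauss_kernel c b u)%:E)%E = (gauss_mass c)%:E.
Proof.
move=> c0; set s := (Num.sqrt c)^-1.
have s0 : s != 0 by rewrite invr_eq0 sqrtr_eq0 -ltNge.
have pk0 : normal_peak s != 0 by rewrite gt_eqF // normal_peak_gt0.
have := integral_normal_pdf (- b) s; rewrite normal_pdfE //.
under eq_integral do rewrite EFinM.
rewrite ge0_integralZl //=; first last.
- by rewrite lee_fin normal_peak_ge0.
- by move=> x _; rewrite lee_fin normal_fun_ge0.
- by apply/measurable_EFinP; exact: measurable_normal_fun.
rewrite -gauss_kernel_normal // => /(congr1 (fun z => ((normal_peak s)^-1)%:E * z)%E).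
rewrite muleA -EFinM mulVf // mul1e mule1 => ->; congr EFin.
rewrite /normal_peak invrK /gauss_mass /s exprVn sqr_sqrtr ?ltW //.
by congr Num.sqrt; rewrite -mulrnAr mulrC.
Qed.

Lemma gauss_mass_quarter c : 0 < c -> gauss_mass (c / 4) = 2 * gauss_mass c.
Proof.
move=> c0; rewrite /gauss_mass.
have -> : pi *+ 2 / (c / 4) = 2 ^+ 2 * (pi *+ 2 / c) by field; exact: lt0r_neq0.
by rewrite sqrtrM ?sqr_ge0 // sqrtr_sqr ger0_norm.
Qed.

Lemma gauss_kernel_abs_le c b u : 0 < c ->
  gauss_kernel c b u * `|u + b| <= (1 + 8 / (3 * c)) * gauss_kernel (c / 4) b u.
Proof.
move=> c0; rewrite /gauss_kernel.
set y := u + b; set a := 3 * c / 8.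
have a0 : 0 < a by rewrite /a divr_gt0 // mulr_gt0.
have -> : - (c * y ^+ 2) / 2 = - (c / 4 * y ^+ 2) / 2 + - (a * y ^+ 2).
  by rewrite /a; field.
rewrite expRD -mulrA [X in _ <= X]mulrC ler_wpM2l ?expR_ge0 //.
rewrite expRN mulrC ler_pdivrMr ?expR_gt0 //.
(* [|y| <= (1 + 1/a) (1 + a y^2) <= (1 + 1/a) exp (a y^2)] *)
have -> : 8 / (3 * c) = a^-1 by rewrite /a; field; exact: lt0r_neq0.
apply: le_trans (_ : _ <= (1 + a^-1) * (1 + a * y ^+ 2)) _; last first.
  by rewrite ler_wpM2l ?expR_ge1Dx // addr_ge0 // invr_ge0 ltW.
have -> : (1 + a^-1) * (1 + a * y ^+ 2) = 1 + a * y ^+ 2 + a^-1 + y ^+ 2.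
  by field; exact: lt0r_neq0.
rewrite -real_normK ?num_real //.
have : 0 <= a * `|y| ^+ 2 by rewrite mulr_ge0 ?sqr_ge0 ?ltW.
have : 0 <= a^-1 by rewrite invr_ge0 ltW.
have := sqr_ge0 (`|y| - 1); have : 0 <= `|y| by []; nra.
Qed.

Lemma integral_gauss_kernel_affine c b (X Y : R) : 0 < c -> 0 <= X -> 0 <= Y ->
  (\int[leb]_(u in [set: R]) (gauss_kernel c b u * (X + Y * `|u + b|))%:E <=
   ((X + Y * ((1 + 8 / (3 * c)) *+ 2)) * gauss_mass c)%:E)%E.
Proof.
move=> c0 X0 Y0.
have c40 : 0 < c / 4 by rewrite divr_gt0.
set M := 1 + 8 / (3 * c).
have YM0 : 0 <= Y * M by rewrite mulr_ge0 // addr_ge0 // divr_ge0 // mulr_ge0 // ltW.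
have mg c' : 0 < c' -> measurable_fun [set: R] (fun u => (gauss_kernel c' b u)%:E).
  by move=> c'0; apply/measurable_EFinP; exact: measurable_gauss_kernel.
have g0 c' u : [set: R] u -> (0 <= (gauss_kernel c' b u)%:E)%E.
  by rewrite lee_fin gauss_kernel_ge0.
have kg0 c' (k : R) : 0 <= k ->
    forall u, [set: R] u -> (0 <= k%:E * (gauss_kernel c' b u)%:E)%E.
  by move=> k0 u _; rewrite mule_ge0 ?g0.
apply: (@le_trans _ _ (\int[leb]_(u in [set: R])
   (X%:E * (gauss_kernel c b u)%:E + (Y * M)%:E * (gauss_kernel (c / 4) b u)%:E))%E).
  apply: ge0_le_integral_nomeas => u _.
    by rewrite lee_fin mulr_ge0 ?gauss_kernel_ge0 ?addr_ge0 ?mulr_ge0.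
  rewrite -!EFinM -EFinD lee_fin mulrDr mulrC lerD2l -mulrA mulrCA ler_wpM2l //.
  exact: gauss_kernel_abs_le.
rewrite (ge0_integralD leb measurableT (kg0 _ _ X0)
  (measurable_funeM _ (mg _ c0)) (kg0 _ _ YM0) (measurable_funeM _ (mg _ c40))).
rewrite !ge0_integralZl ?lee_fin ?integral_gauss_kernel //;
  try solve [exact: mg | exact: g0].
rewrite gauss_mass_quarter // -!EFinM -EFinD lee_fin.
by rewrite le_eqVlt; apply/orP; left; apply/eqP; rewrite mulr2n; ring.
Qed.

End gauss_kernel.

Section quadratic_form.
Context {R : realFieldType}.

Definition qform n (P : 'M[R]_n) (v : nat -> R) : R :=
  ((\row_(i < n) v i) *m P *m (\row_(i < n) v i)^T) ord0 ord0.

Definition qform_posdef n (P : 'M[R]_n) : Prop :=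
  forall v : nat -> R, (\row_(i < n) v i) != 0 -> 0 < qform P v.

Lemma qformE n (P : 'M[R]_n) v :
  qform P v = \sum_(j < n) \sum_(i < n) v i * P i j * v j.
Proof.
rewrite /qform !mxE; apply: eq_bigr => j _; rewrite !mxE mulr_suml.
by apply: eq_bigr => i _; rewrite !mxE.
Qed.

Lemma qform_vcons n (P : 'M[R]_n.+1) u v : qform P (vcons u v) =
  u * P ord0 ord0 * u + \sum_(i < n) v i * P (lift ord0 i) ord0 * u
  + \sum_(j < n) (u * P ord0 (lift ord0 j) * v j
      + \sum_(i < n) v i * P (lift ord0 i) (lift ord0 j) * v j).
Proof.
rewrite qformE !big_ord_recl; congr (_ + _ + _).
apply: eq_bigr => j _; rewrite big_ord_recl lift0.
by congr (_ + _); apply: eq_bigr => i _; rewrite lift0.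
Qed.

Lemma qform_unit0 n (P : 'M[R]_n.+1) : qform P (vcons 1 (fun=> 0)) = P ord0 ord0.
Proof.
rewrite qform_vcons big1 ?big1 ?mulr1 ?mul1r ?addr0 // => [j _|i _].
  by rewrite mulr0 add0r big1 // => i _; rewrite mulr0.
by rewrite !mul0r.
Qed.

Lemma row_vcons_neq0 n (u : R) (v : nat -> R) : (\row_(i < n) v i) != 0 ->
  (\row_(i < n.+1) vcons u v i) != 0.
Proof.
apply: contra => /eqP/rowP v0; apply/eqP/rowP => i.
by have := v0 (lift ord0 i); rewrite !mxE lift0.
Qed.

Lemma qform_posdef00 n (P : 'M[R]_n.+1) : qform_posdef P -> 0 < P ord0 ord0.
Proof.
move=> Ppos; rewrite -qform_unit0; apply: Ppos.
by apply/eqP => /rowP /(_ ord0); rewrite !mxE; apply/eqP; exact: oner_neq0.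
Qed.

Definition schur_row n (P : 'M[R]_n.+1) (v : nat -> R) : R :=
  \sum_(j < n) P ord0 (lift ord0 j) * v j.

Definition schur n (P : 'M[R]_n.+1) : 'M[R]_n :=
  \matrix_(i, j) (P (lift ord0 i) (lift ord0 j)
     - P ord0 (lift ord0 i) * P ord0 (lift ord0 j) / P ord0 ord0).

Lemma qform_vcons_square n (P : 'M[R]_n.+1) u v : P^T = P -> P ord0 ord0 != 0 ->
  qform P (vcons u v) =
  P ord0 ord0 * (u + schur_row P v / P ord0 ord0) ^+ 2 + qform (schur P) v.
Proof.
move=> Psym c0.
have sym i j : P j i = P i j by rewrite -[in LHS]Psym mxE.
set c := P ord0 ord0.
set X := \sum_(j < n) \sum_(i < n) v i * P (lift ord0 i) (lift ord0 j) * v j.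
have -> : qform (schur P) v = X - schur_row P v ^+ 2 / c.
  have -> : schur_row P v ^+ 2 / c = \sum_(j < n) \sum_(i < n)
      v i * (P ord0 (lift ord0 i) * P ord0 (lift ord0 j) / c) * v j.
    rewrite /schur_row expr2 big_distrlr /= exchange_big mulr_suml.
    by apply: eq_bigr => j _; rewrite mulr_suml; apply: eq_bigr => i _; ring.
  rewrite qformE /X -sumrB; apply: eq_bigr => j _.
  by rewrite -sumrB; apply: eq_bigr => i _; rewrite mxE -/c; ring.
rewrite qform_vcons big_split /= -/X -/c.
have -> : \sum_(i < n) v i * P (lift ord0 i) ord0 * u = u * schur_row P v.
  by rewrite /schur_row mulr_sumr; apply: eq_bigr => i _; rewrite sym; ring.
have -> : \sum_(j < n) u * P ord0 (lift ord0 j) * v j = u * schur_row P v.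
  by rewrite /schur_row mulr_sumr; apply: eq_bigr => j _; ring.
by field.
Qed.

Lemma schur_sym n (P : 'M[R]_n.+1) : P^T = P -> (schur P)^T = schur P.
Proof.
move=> Psym; have sym i j : P j i = P i j by rewrite -[in LHS]Psym mxE.
by apply/matrixP => i j; rewrite !mxE sym [_ * P _ _]mulrC.
Qed.

Lemma schur_posdef n (P : 'M[R]_n.+1) :
  P^T = P -> qform_posdef P -> qform_posdef (schur P).
Proof.
move=> Psym Ppos v v0; have c0 := qform_posdef00 Ppos.
have := Ppos _ (row_vcons_neq0 (- (schur_row P v / P ord0 ord0)) v0).
by rewrite qform_vcons_square ?gt_eqF // addNr expr0n mulr0 add0r.
Qed.

Lemma det_schur n (P : 'M[R]_n.+1) : P^T = P -> P ord0 ord0 != 0 ->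
  \det P = P ord0 ord0 * \det (schur P).
Proof.
move=> Psym c0; have sym i j : P j i = P i j by rewrite -[in LHS]Psym mxE.
set c := P ord0 ord0.
pose P' : 'M[R]_(1 + n) := P.
have l0 : lshift n (0 : 'I_1) = ord0 :> 'I_n.+1 by apply/val_inj.
have eul : ulsubmx P' = c%:M by apply/matrixP => i j; rewrite !ord1 !mxE l0.
(* block LU factorisation *)
pose L : 'M[R]_(1 + n) := block_mx 1%:M 0 (c^-1 *: dlsubmx P') 1%:M.
pose U : 'M[R]_(1 + n) := block_mx c%:M (ursubmx P') 0 (schur P).
have LU : P' = L *m U.
  rewrite /L /U mulmx_block ?mul1mx ?mul0mx ?mulmx0 ?addr0 ?add0r.
  rewrite -[LHS]submxK eul; congr block_mx.
    by rewrite -scalemxAl mul_mx_scalar scalerA mulVf // scale1r.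
  apply/matrixP => i j; rewrite !mxE big_ord1 !mxE !rshift1 l0.
  by rewrite [P (lift ord0 i) ord0]sym -/c; field.
transitivity (\det (L *m U)); first by rewrite -LU.
by rewrite det_mulmx det_lblock det_ublock !det1 det_scalar1 !mul1r.
Qed.

End quadratic_form.

Section gauss_l1_moment.
Context {R : realType}.
Local Notation leb := (@lebesgue_measure R).

Definition gauss_l1 n (P : 'M[R]_n) (k : 'I_n -> R) (s A : R) (v : nat -> R) : R :=
  s * expR (- qform P v / 2) * (A + \sum_(i < n) k i * `|v i|).

Lemma gauss_l1_ge0 n (P : 'M[R]_n) k s A v : (forall i, 0 <= k i) ->
  0 <= s -> 0 <= A -> 0 <= gauss_l1 P k s A v.
Proof.
move=> k0 s0 A0; rewrite mulr_ge0 ?mulr_ge0 ?expR_ge0 ?addr_ge0 //.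
by apply: sumr_ge0 => i _; rewrite mulr_ge0.
Qed.

Section first_coordinate.
Variables (n : nat) (P : 'M[R]_n.+1) (k : 'I_n.+1 -> R).
Hypotheses (Psym : P^T = P) (Ppos : qform_posdef P) (k0 : forall i, 0 <= k i).
Local Notation c := (P ord0 ord0).

(* Weights after integrating out coordinate 0: the shift
   [schur_row P v / c] of the Gaussian in that coordinate is charged
   to the remaining coordinates. *)
Definition schur_weight (i : 'I_n) : R :=
  k (lift ord0 i) + k ord0 * (`|P ord0 (lift ord0 i)| / c).

Lemma schur_weight_ge0 i : 0 <= schur_weight i.
Proof.
by rewrite addr_ge0 // mulr_ge0 // divr_ge0 // ltW // qform_posdef00.
Qed.

Lemma integral_gauss_l1_vcons s A (v : nat -> R) : 0 <= s -> 0 <= A ->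
  (\int[leb]_(u in [set: R]) (gauss_l1 P k s A (vcons u v))%:E <=
   (gauss_l1 (schur P) schur_weight (s * gauss_mass c)
      (A + k ord0 * ((1 + 8 / (3 * c)) *+ 2)) v)%:E)%E.
Proof.
move=> s0 A0; have c0 := qform_posdef00 Ppos.
set beta := schur_row P v / c.
set T := \sum_(i < n) k (lift ord0 i) * `|v i|.
set Z := (\sum_(i < n) `|P ord0 (lift ord0 i)| * `|v i|) / c.
set e := expR (- qform (schur P) v / 2).
have weightE : \sum_(i < n) schur_weight i * `|v i| = T + k ord0 * Z.
  rewrite /Z mulr_suml mulr_sumr -big_split /=; apply: eq_bigr => i _.
  by rewrite /schur_weight; ring.
have beta_le : `|beta| <= Z.
  have ci0 : 0 <= c^-1 by rewrite invr_ge0 ltW.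
  rewrite /beta /Z /schur_row normrM [`|c^-1|]ger0_norm // ler_wpM2r //.
  by apply: (le_trans (ler_norm_sum _ _ _)); apply: ler_sum => i _; rewrite normrM.
set X := s * e * (A + (T + k ord0 * Z)).
set Y := s * e * k ord0.
have X0 : 0 <= X.
  by rewrite !mulr_ge0 ?expR_ge0 // -weightE addr_ge0 // sumr_ge0 // => i _;
    rewrite mulr_ge0 ?schur_weight_ge0.
apply: (@le_trans _ _
   (\int[leb]_(u in [set: R]) (gauss_kernel c beta u * (X + Y * `|u + beta|))%:E)%E).
  apply: ge0_le_integral_nomeas => u _; first by rewrite lee_fin gauss_l1_ge0.
  rewrite lee_fin /gauss_l1 qform_vcons_square ?gt_eqF // -/beta big_ord_recl -/T.
  have -> : expR (- (c * (u + beta) ^+ 2 + qform (schur P) v) / 2) =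
      gauss_kernel c beta u * e by rewrite /gauss_kernel /e -expRD; congr expR; ring.
  have -> : X + Y * `|u + beta| =
      s * e * (A + ((T + k ord0 * Z) + k ord0 * `|u + beta|)) by rewrite /X /Y; ring.
  rewrite (mulrC s) -!mulrA ler_wpM2l ?gauss_kernel_ge0 // mulrCA.
  rewrite !ler_wpM2l ?expR_ge0 // lerD2l /=.
  have : `|u| <= `|u + beta| + Z.
    by apply: le_trans (lerD (lexx _) beta_le); rewrite -[u in `|u|](addrK beta) ler_normB.
  by have := k0 ord0; rewrite /= [T + _]addrC; nra.
apply: (le_trans (integral_gauss_kernel_affine beta c0 X0 _)).
  by rewrite /Y !mulr_ge0 ?expR_ge0.
rewrite lee_fin /gauss_l1 weightE -/e /X /Y.
by rewrite le_eqVlt; apply/orP; left; apply/eqP; ring.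
Qed.

End first_coordinate.

Lemma iter_gauss_l1_le n (P : 'M[R]_n) (k : 'I_n -> R) :
  P^T = P -> qform_posdef P -> (forall i, 0 <= k i) ->
  exists2 K, 0 <= K & forall s A, 0 <= s -> 0 <= A ->
   (iter_leb_int n (fun v => (gauss_l1 P k s A v)%:E) <=
    (s * Num.sqrt ((pi *+ 2) ^+ n / \det P) * (A + K))%:E)%E.
Proof.
elim: n P k => [|n IH] P k Psym Ppos k0.
  exists 0 => // s A s0 A0.
  rewrite /= /gauss_l1 qformE !big_ord0 det_mx00 expr0 divr1 sqrtr1 oppr0 mul0r.
  by rewrite expR0.
have c0 := qform_posdef00 Ppos; set c := P ord0 ord0 in c0 *.
have [K' K'0 HK'] := IH _ _ (schur_sym Psym) (schur_posdef Psym Ppos)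
  (schur_weight_ge0 Ppos k0).
set K1 := k ord0 * ((1 + 8 / (3 * c)) *+ 2).
have K10 : 0 <= K1.
  by rewrite mulr_ge0 // mulrn_wge0 // addr_ge0 // divr_ge0 // mulr_ge0 // ltW.
exists (K1 + K'); first exact: addr_ge0.
move=> s A s0 A0; rewrite iter_leb_int_vcons.
have gm0 : 0 <= s * gauss_mass c by rewrite mulr_ge0 ?sqrtr_ge0.
apply: (le_trans _ (le_trans (HK' _ _ gm0 (addr_ge0 A0 K10)) _)).
  apply: le_iter_leb_int => v; last exact: integral_gauss_l1_vcons.
  by apply: integral_ge0 => u _; rewrite lee_fin gauss_l1_ge0.
have mass : gauss_mass c * Num.sqrt ((pi *+ 2) ^+ n / \det (schur P)) =
    Num.sqrt ((pi *+ 2) ^+ n.+1 / \det P).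
  rewrite (det_schur Psym (lt0r_neq0 c0)) -/c /gauss_mass -sqrtrM; last first.
    by apply: divr_ge0; [rewrite mulrn_wge0 ?pi_ge0 | exact: ltW].
  by congr Num.sqrt; rewrite exprS invfM; ring.
by rewrite lee_fin -mass addrA le_eqVlt; apply/orP; left; apply/eqP; ring.
Qed.

End gauss_l1_moment.

Section interval_integrals.
Context {R : realType}.
Local Notation leb := (@lebesgue_measure R).

Lemma lebesgue_measure_itv_cc (a b : R) : a <= b ->
  leb [set` `[a, b]] = (b - a)%:E.
Proof.
rewrite lebesgue_measure_itv /= lte_fin -EFinB le_eqVlt => /orP[/eqP->|->] //.
by rewrite ltxx subrr.
Qed.

Lemma integral_itv_cst_sub_indic (a b c e M D : R) :
  a <= c -> c <= e -> e <= b -> 0 <= D -> D <= M ->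
  (\int[leb]_(u in [set` `[a, b]]) (M - D * \1_[set` `[c, e]] u)%:E =
   (M * (b - a) - D * (e - c))%:E)%E.
Proof.
move=> ac ce eb D0 DM.
have ab : a <= b by lra.
have mI : measurable [set` `[c, e]] := measurable_itv _.
have ind01 u : 0 <= (\1_[set` `[c, e]] u : R) <= 1.
  by rewrite indicE; case: (u \in _); rewrite ?lexx ?ler01.
have DI0 u : [set` `[a, b]] u -> (0 <= (D * \1_[set` `[c, e]] u)%:E)%E.
  by move=> _; rewrite lee_fin; have /andP[] := ind01 u; nra.
have MDI0 u : [set` `[a, b]] u -> (0 <= (M - D * \1_[set` `[c, e]] u)%:E)%E.
  by move=> _; rewrite lee_fin; have /andP[] := ind01 u; nra.
have mDI : measurable_fun [set` `[a, b]] (fun u => (D * \1_[set` `[c, e]] u)%:E).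
  by apply/measurable_funTS/measurable_EFinP/measurable_funM => //;
    exact: measurable_indic.
have mMDI : measurable_fun [set` `[a, b]]
    (fun u => (M - D * \1_[set` `[c, e]] u)%:E).
  by apply/measurable_funTS/measurable_EFinP/measurable_funB => //;
    apply: measurable_funM => //; exact: measurable_indic.
have intD : (\int[leb]_(u in [set` `[a, b]]) (D * \1_[set` `[c, e]] u)%:E)%E =
    (D * (e - c))%:E.
  under eq_integral do rewrite EFinM.
  rewrite ge0_integralZl ?lee_fin //; last first.
    by apply/measurable_funTS/measurable_EFinP; exact: measurable_indic.
  rewrite integral_indic // setIidl; last first.
    by move=> u /=; rewrite !in_itv /= => /andP[? ?]; apply/andP; split; lra.
  by rewrite /= lebesgue_measure_itv_cc // -EFinM.
have intM : (\int[leb]_(u in [set` `[a, b]]) M%:E)%E = (M * (b - a))%:E.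
  by rewrite integral_cst //= lebesgue_measure_itv_cc // -EFinM.
have : (\int[leb]_(u in [set` `[a, b]]) M%:E)%E =
    (\int[leb]_(u in [set` `[a, b]]) (M - D * \1_[set` `[c, e]] u)%:E +
     (D * (e - c))%:E)%E.
  rewrite -intD -ge0_integralD //.
  by apply: eq_integral => u _; rewrite -EFinD subrK.
rewrite intM => /(congr1 (fun z => z - (D * (e - c))%:E)%E).
by rewrite addeK // -EFinB => ->.
Qed.

End interval_integrals.

Section slice_sampling_step.
Context {R : realType} {d : nat}.
Local Notation leb := (@lebesgue_measure R).
Variables (rho : 'rV[R]_d -> R) (x w : 'rV[R]_d) (t : R) (f : 'rV[R]_d -> \bar R).
Hypothesis f0 : forall y, (0 <= f y)%E.

Lemma shrink_ge0 n a b : a <= b -> (0 <= shrink rho x w t f n a b)%E.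
Proof.
elim: n a b => [|n IH] a b ab //=.
apply: mule_ge0; first by rewrite lee_fin invr_ge0 subr_ge0.
apply: integral_ge0 => th /=; rewrite in_itv /= => /andP[ath thb].
by case: ifP => // _; case: ifP => _; exact: IH.
Qed.

Variable M : R.
Hypothesis fM : forall th, (f (ellipse x w th) <= M%:E)%E.

Lemma shrink_le n a b : 0 <= M -> a <= b -> (shrink rho x w t f n a b <= M%:E)%E.
Proof.
move=> M0; elim: n a b => [|n IH] a b ab /=; first by rewrite lee_fin.
have [->|ab'] := eqVneq a b.
  by rewrite set_itv1 integral_set1 mule0 lee_fin.
have ba0 : 0 < b - a by rewrite subr_gt0 lt_neqAle ab' ab.
apply: (@le_trans _ _ (((b - a)^-1)%:E * \int[leb]_(th in [set` `[a, b]]) M%:E)%E).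
  apply: lee_wpmul2l; first by rewrite lee_fin invr_ge0 ltW.
  apply: ge0_le_integral_nomeas => th /=; rewrite in_itv /= => /andP[ath thb].
    by case: ifP => // _; case: ifP => _; exact: shrink_ge0.
  by case: ifP => // _; case: ifP => _; exact: IH.
rewrite integral_cst //= lebesgue_measure_itv_cc // -EFinM lee_fin.
by rewrite mulrCA mulVf ?gt_eqF // mulr1.
Qed.

Lemma ess_run_ge0 n : (0 <= ess_run rho x w t f n)%E.
Proof.
apply: mule_ge0; first by rewrite lee_fin invr_ge0 mulrn_wge0 // pi_ge0.
apply: integral_ge0 => th /=; rewrite in_itv /= => /andP[th0 th2pi].
case: ifP => // _; apply: shrink_ge0.
by rewrite lerBlDr lerDl mulrn_wge0 // pi_ge0.
Qed.

Lemma ess_run_le_bound n : 0 <= M -> (ess_run rho x w t f n <= M%:E)%E.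
Proof.
move=> M0; have pi2 : 0 < pi *+ 2 :> R by rewrite mulrn_wgt0 // pi_gt0.
apply: (@le_trans _ _ (((pi *+ 2)^-1)%:E *
    \int[leb]_(th in [set` `[0%R, (pi *+ 2)%R]]) M%:E)%E).
  apply: lee_wpmul2l; first by rewrite lee_fin invr_ge0 ltW.
  apply: ge0_le_integral_nomeas => th /=; rewrite in_itv /= => /andP[th0 _];
    have bracket : th - pi *+ 2 <= th by rewrite lerBlDr lerDl ltW.
    by case: ifP => _; [exact: f0 | exact: shrink_ge0].
  by case: ifP => _; [exact: fM | exact: shrink_le].
rewrite integral_cst //= lebesgue_measure_itv_cc ?(ltW pi2) // subr0 -EFinM lee_fin.
by rewrite mulrCA mulVf ?gt_eqF // mulr1.
Qed.

Lemma ess_run_le n (c e D : R) :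
  0 <= c -> c <= e -> e <= pi *+ 2 -> 0 <= D -> D <= M ->
  (forall th, c <= th <= e ->
     t <= rho (ellipse x w th) /\ (f (ellipse x w th) <= (M - D)%:E)%E) ->
  (ess_run rho x w t f n <= (M - D * (e - c) / (pi *+ 2))%:E)%E.
Proof.
move=> c0 ce e2pi D0 DM arc.
have pi2 : 0 < pi *+ 2 :> R by rewrite mulrn_wgt0 // pi_gt0.
apply: (@le_trans _ _ (((pi *+ 2)^-1)%:E *
    \int[leb]_(th in [set` `[0%R, (pi *+ 2)%R]]) (M - D * \1_[set` `[c, e]] th)%:E)%E).
  apply: lee_wpmul2l; first by rewrite lee_fin invr_ge0 ltW.
  apply: ge0_le_integral_nomeas => th /=; rewrite in_itv /= => /andP[th0 th2pi].
    case: ifP => // _; apply: shrink_ge0.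
    by rewrite lerBlDr lerDl ltW.
  rewrite indicE; have [thI|thI] := boolP (th \in _).
    have /arc[-> fle] : c <= th <= e by move: thI; rewrite inE /= in_itv.
    by rewrite mulr1n mulr1.
  rewrite mulr0n mulr0 subr0.
  case: ifP => _ //; apply: shrink_le; first lra.
  by rewrite lerBlDr lerDl ltW.
rewrite integral_itv_cst_sub_indic // subr0 -EFinM lee_fin.
by rewrite mulrBr [_^-1 * (M * _)]mulrCA mulVf ?gt_eqF // mulr1 [_^-1 * _]mulrC.
Qed.

End slice_sampling_step.

Section contraction.
Context {R : realType}.

Lemma invsqrt2_lt1 : (Num.sqrt 2)^-1 < 1 :> R.
Proof.
by rewrite invf_lt1 ?sqrtr_gt0 // -[X in X < _]sqrtr1 ltr_sqrt // ltr1n.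
Qed.

Lemma cos_small_near_pihalf (a : R) : 0 < a -> exists beta : R,
  [/\ 0 < beta, beta <= 1 & forall th, `|pi / 2 - th| <= beta -> `|cos th| <= a].
Proof.
move=> a0; have /cvgrPdist_le /(_ a a0) := @continuous_cos R (pi / 2).
rewrite cos_pihalf => -[e /= e0 He]; exists (Num.min (e / 2) 1); split.
- by rewrite lt_min ltr01 divr_gt0.
- by rewrite ge_min lexx orbT.
move=> th th_near; have := He th; rewrite sub0r normrN; apply.
apply: le_lt_trans th_near _.
by rewrite gt_min ltr_pdivrMr // ltr_pMr // ltr1n.
Qed.

Lemma ess_rate_bounds (alpha beta : R) : 0 < alpha < 1 -> 0 < beta <= 1 ->
  0 < beta / pi * (1 - alpha) <= 1.
Proof.
move=> /andP[a0 a1] /andP[b0 b1]; have := pi_ge2 R => pi2.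
have bp0 : 0 < beta / pi by rewrite divr_gt0 ?pi_gt0.
have bp1 : beta / pi <= 1 by rewrite ler_pdivrMr ?pi_gt0 // mul1r; lra.
by rewrite mulr_gt0 ?subr_gt0 //=; nra.
Qed.

(* Gain over the trivial bound [|y| <= |x| + |w|] on the arc of probability
   [beta / pi]. *)
Definition ess_gain (alpha R0 N W : R) : R :=
  if (R0 < N) && (W <= alpha * N / 2) then N + W - alpha * N else 0.

Lemma ess_run_enorm_le d (rho : 'rV[R]_d -> R) (alpha R0 beta : R) x w t n :
  (R0 < enorm x -> eball 0 (alpha * enorm x) `<=` Glevel rho (rho x)) ->
  0 < alpha -> alpha <= 1 -> 0 < beta -> beta <= pi / 2 ->
  (forall th, `|pi / 2 - th| <= beta -> `|cos th| <= alpha / 2) ->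
  t <= rho x ->
  (ess_run rho x w t (fun y => (enorm y)%:E) n <=
     (enorm x + enorm w - beta / pi * ess_gain alpha R0 (enorm x) (enorm w))%:E)%E.
Proof.
move=> ball a0 a1 b0 bpi cos_small trho.
have N0 := enorm_ge0 x; have W0 := enorm_ge0 w.
set N := enorm x in N0 ball *; set W := enorm w in W0 *.
have f0 (y : 'rV[R]_d) : (0 <= (enorm y)%:E)%E by rewrite lee_fin enorm_ge0.
have fM th : ((enorm (ellipse x w th))%:E <= (N + W)%:E)%E.
  by rewrite lee_fin enorm_ellipse_le.
rewrite /ess_gain; case: ifP => [/andP[RN WN]|_]; last first.
  by rewrite mulr0 subr0; apply: (ess_run_le_bound _ _ f0 fM); exact: addr_ge0.
have pi2 : 2 <= pi :> R := pi_ge2 R.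
have -> : beta / pi * (N + W - alpha * N) =
    (N + W - alpha * N) * ((pi / 2 + beta) - (pi / 2 - beta)) / (pi *+ 2).
  by rewrite mulr2n; field; lra.
have D0 : 0 <= N + W - alpha * N by nra.
have DM : N + W - alpha * N <= N + W by nra.
have pihalf : pi / 2 <= pi :> R by rewrite ler_pdivrMr //; lra.
apply: (ess_run_le f0 fM _ _ _ _ D0 DM); [lra | lra | lra |].
move=> th /andP[th1 th2].
have cos_th : `|cos th| <= alpha / 2 by apply: cos_small; rewrite ler_norml; lra.
have near0 : enorm (ellipse x w th) <= alpha * N.
  apply: (le_trans (enorm_ellipse x w th)); rewrite -/N -/W.
  have := sin_max th; have : 0 <= `|cos th| by []; have : 0 <= `|sin th| by [].
  nra.
split; last by rewrite lee_fin; lra.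
by apply: le_trans trho (ball RN _ _); rewrite /eball /= subr0.
Qed.

Lemma ess_gain_bound (alpha R0 beta N W : R) :
  0 < alpha -> alpha < 1 -> 0 < beta -> 0 < R0 -> 0 <= N -> 0 <= W ->
  N + W - beta / pi * ess_gain alpha R0 N W <=
  (1 - beta / pi * (1 - alpha)) * N + beta / pi * (1 - alpha) * R0
  + (1 + 2 * (beta / pi * (1 - alpha)) / alpha) * W.
Proof.
move=> a0 a1 b0 R00 N0 W0; set c := beta / pi * (1 - alpha).
have bp0 : 0 < beta / pi by rewrite divr_gt0 // pi_gt0.
have c0 : 0 <= c by rewrite mulr_ge0 ?(ltW bp0) // subr_ge0 (ltW a1).
have qW : 0 <= 2 * c / alpha * W.
  by apply: mulr_ge0 => //; apply: divr_ge0; [exact: mulr_ge0 | exact: ltW].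
have cR : 0 <= c * R0 by rewrite mulr_ge0 // (ltW R00).
have bW : 0 <= beta / pi * W by rewrite mulr_ge0 // (ltW bp0).
rewrite /ess_gain; case: ifP => [/andP[_ _]|/negbT].
  have -> : beta / pi * (N + W - alpha * N) = c * N + beta / pi * W by rewrite /c; ring.
  nra.
rewrite mulr0 subr0 negb_and -leNgt -ltNge => /orP[NR|WN].
  have := ler_wpM2l c0 NR.
  nra.
have NW : N <= 2 * W / alpha.
  by rewrite ler_pdivlMr //; rewrite ltr_pdivrMr // in WN; nra.
have : c * N <= 2 * c / alpha * W.
  by rewrite (_ : _ * W = c * (2 * W / alpha)); [exact: ler_wpM2l | ring].
nra.
Qed.

End contraction.

Section gaussian_measure.
Context {R : realType} {d : nat}.

Lemma sym_posdef_unitmx (C : 'M[R]_d) : sym_posdef C -> C \in unitmx.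
Proof.
move=> [_ Cpos]; rewrite unitmxE unitfE; apply/negP => /det0P [v v0 vC].
by have := Cpos v v0; rewrite vC mul0mx mxE ltxx.
Qed.

Lemma sym_posdef_inv (C : 'M[R]_d) : sym_posdef C ->
  (invmx C)^T = invmx C /\ qform_posdef (invmx C).
Proof.
move=> HC; have Cu := sym_posdef_unitmx HC; case: HC => Csym Cpos.
have Ps : (invmx C)^T = invmx C by rewrite trmx_inv Csym.
split => // v; set y := \row_(i < d) v i => y0.
have z0 : y *m invmx C != 0.
  by apply: contra y0 => /eqP yC; rewrite -(mulmxKV Cu y) yC mul0mx.
by have := Cpos _ z0; rewrite (mulmxKV Cu) trmx_mul Ps mulmxA.
Qed.

(* A Gaussian has a finite first absolute moment. *)
Lemma gauss_int_affine_le (C : 'M[R]_d) (K : R) : sym_posdef C -> 0 <= K ->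
  exists2 L, 0 <= L & forall (A : R) (g : 'rV[R]_d -> \bar R), 0 <= A ->
    (forall w, 0 <= g w)%E -> (forall w, g w <= (A + K * enorm w)%:E)%E ->
    (gauss_int C g <= (A + L)%:E)%E.
Proof.
move=> HC K0; have [Psym Ppos] := sym_posdef_inv HC.
have [L L0 HL] := iter_gauss_l1_le Psym Ppos (fun=> K0).
exists L => // A g A0 g0 gle.
set s := (Num.sqrt ((pi *+ 2) ^+ d * \det C))^-1.
have s0 : 0 <= s by rewrite invr_ge0 sqrtr_ge0.
apply: (le_trans _ (le_trans (HL s A s0 A0) _)).
  apply: le_iter_leb_int => v.
    by rewrite mule_ge0 // lee_fin mulr_ge0 ?expR_ge0.
  apply: le_trans (lee_wpmul2l _ (gle _)) _.
    by rewrite lee_fin mulr_ge0 ?expR_ge0.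
  rewrite -EFinM lee_fin /gauss_l1 ler_wpM2l ?mulr_ge0 ?expR_ge0 // lerD2l.
  rewrite -mulr_sumr ler_wpM2l //; apply: le_trans (enorm_le_sum_abs _) _.
  by under eq_bigr do rewrite mxE.
rewrite lee_fin det_inv invrK ler_piMl ?addr_ge0 //.
by have [->|X0] := eqVneq (Num.sqrt ((pi *+ 2) ^+ d * \det C)) 0;
  rewrite /s ?mulr0 ?ler01 ?mulVf.
Qed.

End gaussian_measure.

Section level_average.
Context {R : realType} {d : nat}.
Local Notation leb := (@lebesgue_measure R).
Variables (rho : 'rV[R]_d -> R) (alpha R0 beta : R) (x w : 'rV[R]_d).
Hypotheses (ball : R0 < enorm x -> eball 0 (alpha * enorm x) `<=` Glevel rho (rho x))
  (a0 : 0 < alpha) (a1 : alpha <= 1) (b0 : 0 < beta) (bpi : beta <= pi / 2)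
  (cos_small : forall th, `|pi / 2 - th| <= beta -> `|cos th| <= alpha / 2)
  (rho0 : 0 < rho x).

Let ess_sup_run t :=
  ereal_sup (range (fun n => ess_run rho x w t (fun y => (enorm y)%:E) n)).

Let ess_sup_run_bounds t : 0 <= t <= rho x ->
  (0 <= ess_sup_run t)%E /\
  (ess_sup_run t <=
    (enorm x + enorm w - beta / pi * ess_gain alpha R0 (enorm x) (enorm w))%:E)%E.
Proof.
have f0 (y : 'rV[R]_d) : (0 <= (enorm y)%:E)%E by rewrite lee_fin enorm_ge0.
move=> /andP[_ trho]; split.
  apply: le_trans (ess_run_ge0 rho x w t f0 0) _.
  by apply: ereal_sup_ubound; exists 0%N.
by apply: ge_ereal_sup => _ [n _ <-]; exact: ess_run_enorm_le.
Qed.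

Lemma ess_level_average_ge0 :
  (0 <= ((rho x)^-1)%:E * \int[leb]_(t in [set` `[0%R, rho x]]) ess_sup_run t)%E.
Proof.
apply: mule_ge0; first by rewrite lee_fin invr_ge0 (ltW rho0).
by apply: integral_ge0 => t; rewrite /= in_itv => /ess_sup_run_bounds[].
Qed.

Lemma ess_level_average_le :
  (((rho x)^-1)%:E * \int[leb]_(t in [set` `[0%R, rho x]]) ess_sup_run t <=
   (enorm x + enorm w - beta / pi * ess_gain alpha R0 (enorm x) (enorm w))%:E)%E.
Proof.
set B := _ - _.
apply: (@le_trans _ _ (((rho x)^-1)%:E *
    \int[leb]_(t in [set` `[0%R, rho x]]) B%:E)%E).
  apply: lee_wpmul2l; first by rewrite lee_fin invr_ge0 (ltW rho0).
  by apply: ge0_le_integral_nomeas => t; rewrite /= in_itv => /ess_sup_run_bounds[].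
rewrite integral_cst //= lebesgue_measure_itv_cc ?(ltW rho0) // subr0 -EFinM.
by rewrite lee_fin mulrCA mulVf ?gt_eqF // mulr1.
Qed.

End level_average.

Theorem lemma1 (R : realType) (d : nat) (C : 'M[R]_d)
  (rho : 'rV[R]_d -> R) :
  sym_posdef C ->
  measurable_fun [set: 'rV[R]_d] rho ->
  (forall x, 0 < rho x) ->
  (exists (alpha : R) (R0 : R),
      [/\ 0 < alpha, alpha <= (Num.sqrt 2)^-1, 0 < R0 &
       forall x : 'rV[R]_d, R0 < enorm x ->
         eball 0 (alpha * enorm x) `<=` Glevel rho (rho x)]) ->
  exists (delta L : R),
    [/\ 0 <= delta, delta < 1, 0 <= L &
     forall x : 'rV[R]_d,
       (ess_kernel_int C rho x (fun y => (enorm y)%:E) <= (delta * enorm x + L)%:E)%E].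
Proof.
move=> HC _ rho0 [alpha [R0 [a0 aS R00 ball]]].
have a1 : alpha < 1 := le_lt_trans aS invsqrt2_lt1.
have [beta [b0 b1 bcos]] := cos_small_near_pihalf (divr_gt0 a0 (ltr0Sn R 1)).
have bpi : beta <= pi / 2.
  by apply: le_trans b1 _; rewrite ler_pdivlMr // mul1r; exact: pi_ge2.
set c := beta / pi * (1 - alpha).
have /andP[c0 c1] : 0 < c <= 1 by apply: ess_rate_bounds; rewrite ?a0 ?a1 ?b0 ?b1.
have K0 : 0 <= 1 + 2 * c / alpha.
  by apply: addr_ge0 => //; apply: divr_ge0; [apply: mulr_ge0 => //; exact: ltW | exact: ltW].
have [L L0 HL] := gauss_int_affine_le HC K0.
have cR0 : 0 <= c * R0 by rewrite mulr_ge0 // ltW.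
exists (1 - c), (c * R0 + L); split; [lra | lra | exact: addr_ge0 |].
move=> x; have avg w := ess_level_average_le w (ball x) a0 (ltW a1) b0 bpi bcos (rho0 x).
apply: le_trans (HL ((1 - c) * enorm x + c * R0) _ _ _ _) _.
- by rewrite addr_ge0 // mulr_ge0 ?enorm_ge0 // subr_ge0.
- by move=> w; exact: ess_level_average_ge0 w (ball x) a0 (ltW a1) b0 bpi bcos (rho0 x).
- move=> w; apply: (le_trans (avg w)); rewrite lee_fin.
  by apply: ess_gain_bound => //; exact: enorm_ge0.
by rewrite lee_fin addrA.
Qed.
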